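(* Let $X^{(\kappa)}_N$ be a twisted affine type with dual Coxeter number $h^\vee$. In the abelian group $\mathcal{T}_0(X^{(\kappa)}_N)$ the following hold for all $a\in I_\sigma$, $u\in\mathbb{C}_{\kappa_a\hbar}$: (1) $T^{(a)}(u+h^\vee)=T^{(a)}(u)^{-1}$ if $X^{(\kappa)}_N=D^{(2)}_{r+1}$ with $r+1$ even or $X^{(\kappa)}_N=D^{(3)}_4$, and $T^{(a)}(u+h^\vee)=T^{(a)}(u+\Omega)^{-1}$ otherwise; (2) $T^{(a)}(u+2h^\vee)=T^{(a)}(u)$.
   Context: Fix $\hbar\in\mathbb{C}\setminus2\pi\sqrt{-1}\mathbb{Q}$; $\mathbb{C}_c:=\mathbb{C}/(2\pi\sqrt{-1}/c)\mathbb{Z}$. Types: $A^{(2)}_{2r-1}$ ($r\ge2$, $h^\vee=2r$), $A^{(2)}_{2r}$ ($r\ge1$, $h^\vee=2r+1$), $D^{(2)}_{r+1}$ ($r\ge3$, $h^\vee=2r$), $E^{(2)}_6$ ($h^\vee=12$), $D^{(3)}_4$ ($h^\vee=6$); $\kappa=3$ for $D^{(3)}_4$, else 2; $I_\sigma=\{1,\dots,r\}$ in the first three cases, $\{1,2,3,4\}$ for $E^{(2)}_6$, $\{1,2\}$ for $D^{(3)}_4$. $\kappa_a$: $A^{(2)}_{2r-1}$: $\kappa_a=1$ ($a<r$), $\kappa_r=2$; $A^{(2)}_{2r}$: all 1; $D^{(2)}_{r+1}$: $\kappa_a=2$ ($a<r$), $\kappa_r=1$; $E^{(2)}_6$: $\kappa_1=\kappa_2=1$,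 $\kappa_3=\kappa_4=2$; $D^{(3)}_4$: $\kappa_1=1$, $\kappa_2=3$. $\Omega=2\pi\sqrt{-1}/(\kappa\hbar)$. $\mathcal{T}_0(X^{(\kappa)}_N)$ is the abelian group (written multiplicatively) generated by $T^{(a)}(u)$ ($a\in I_\sigma$, $u\in\mathbb{C}_{\kappa_a\hbar}$) with relations $T^{(a)}(u-1)T^{(a)}(u+1)=M^{(a)}(u)$, $T^{(0)}(u)=1$, where: $A^{(2)}_{2r-1}$: $M^{(a)}=T^{(a-1)}(u)T^{(a+1)}(u)$ ($a\le r-1$), $M^{(r)}=T^{(r-1)}(u)T^{(r-1)}(u+\Omega)$; $A^{(2)}_{2r}$: $M^{(a)}=T^{(a-1)}(u)T^{(a+1)}(u)$ ($a\le r-1$), $M^{(r)}=T^{(r-1)}(u)T^{(r)}(u+\Omega)$; $D^{(2)}_{r+1}$: $M^{(a)}=T^{(a-1)}(u)T^{(a+1)}(u)$ ($a\le r-2$), $M^{(r-1)}=T^{(r-2)}(u)T^{(r)}(u)T^{(r)}(u+\Omega)$, $M^{(r)}=T^{(r-1)}(u)$; $E^{(2)}_6$: $M^{(1)}=T^{(2)}(u)$, $M^{(2)}=T^{(1)}(u)T^{(3)}(u)$, $M^{(3)}=T^{(2)}(u)T^{(2)}(u+\Omega)T^{(4)}(u)$, $M^{(4)}=T^{(3)}(u)$; $D^{(3)}_4$: $M^{(1)}=T^{(2)}(u)$, $M^{(2)}=T^{(1)}(u)T^{(1)}(u-\Omega)T^{(1)}(u+\Omega)$. *)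

From mathcomp Require Import all_boot all_algebra.
From mathcomp Require Import complex.
From mathcomp Require Import reals trigo.
Import GRing.Theory Num.Theory.
Set Implicit Arguments. Unset Strict Implicit. Unset Printing Implicit Defensive.
Local Open Scope ring_scope.

Inductive twisted_type : Type :=
| A2odd of nat   (* A^(2)_{2r-1}, r >= 2 *)
| A2even of nat  (* A^(2)_{2r},   r >= 1 *)
| D2 of nat      (* D^(2)_{r+1},  r >= 3 *)
| E26
| D34.

Definition tt_wf (X : twisted_type) : bool :=
  match X with
  | A2odd r => (2 <= r)%N | A2even r => (1 <= r)%N | D2 r => (3 <= r)%N
  | E26 => true | D34 => true end.

Definition rank (X : twisted_type) : nat :=
  match X with A2odd r | A2even r | D2 r => r | E26 => 4 | D34 => 2 end.

Definition in_Isigma (X : twisted_type) (a : nat) : bool := (1 <= a <= rank X)%N.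

Definition hvee (X : twisted_type) : nat :=
  match X with
  | A2odd r => 2 * r | A2even r => 2 * r + 1 | D2 r => 2 * r
  | E26 => 12 | D34 => 6 end%N.

Definition kappa (X : twisted_type) : nat := match X with D34 => 3 | _ => 2 end.

Definition kappa_a (X : twisted_type) (a : nat) : nat :=
  match X with
  | A2odd r => if a == r then 2 else 1
  | A2even _ => 1
  | D2 r => if a == r then 1 else 2
  | E26 => if (a <= 2)%N then 1 else 2
  | D34 => if a == 1%N then 1 else 3
  end.

(* D^(2)_{r+1} with r+1 even, or D^(3)_4 *)
Definition special_type (X : twisted_type) : bool :=
  match X with D2 r => odd r | D34 => true | _ => false end.

Section Twisted.
Variable R : realType.
Local Notation C := (R[i]).

Definition twopii : C := 2 * (pi : R)%:C%C * 'i.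

Definition Omega (X : twisted_type) (hb : C) : C := twopii / ((kappa X)%:R * hb).

(* the period defining C_{kappa_a hbar} = C / (2 pi sqrt(-1)/(kappa_a hbar)) Z *)
Definition period (X : twisted_type) (hb : C) (a : nat) : C :=
  twopii / ((kappa_a X a)%:R * hb).

Variable G : zmodType. (* abelian group, written additively *)

Definition Mrhs (X : twisted_type) (hb : C) (t : nat -> C -> G) (a : nat) (u : C) : G :=
  let W := Omega X hb in
  match X with
  | A2odd r => if (a <= r - 1)%N then t (a - 1)%N u + t (a + 1)%N u
               else t (r - 1)%N u + t (r - 1)%N (u + W)
  | A2even r => if (a <= r - 1)%N then t (a - 1)%N u + t (a + 1)%N u
                else t (r - 1)%N u + t r (u + W)
  | D2 r => if (a <= r - 2)%N then t (a - 1)%N u + t (a + 1)%N u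
            else if a == (r - 1)%N then t (r - 2)%N u + t r u + t r (u + W)
            else t (r - 1)%N u
  | E26 => match a with
           | 1 => t 2%N u
           | 2 => t 1%N u + t 3%N u
           | 3 => t 2%N u + t 2%N (u + W) + t 4%N u
           | _ => t 3%N u
           end
  | D34 => if a == 1%N then t 2%N u
           else t 1%N u + t 1%N (u - W) + t 1%N (u + W)
  end.

(* t is a family of elements T^(a)(u) of G, a in I_sigma, u in C_{kappa_a hbar}
   (represented by functions on C invariant under the period), with T^(0) = 1
   (i.e. 0 additively), satisfying the defining relations of T_0(X). *)
Definition T0_family (X : twisted_type) (hb : C) (t : nat -> C -> G) : Prop :=
  [/\ (forall u, t 0%N u = 0),
      (forall a, in_Isigma X a -> forall (u : C) (k : int),
          t a (u + k%:~R * period X hb a) = t a u) &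
      (forall a, in_Isigma X a -> forall u : C,
          t a (u - 1) + t a (u + 1) = Mrhs X hb t a u)].

End Twisted.

From HB Require Import structures.
From mathcomp Require Import all_boot all_algebra.
From mathcomp Require Import complex.
From mathcomp Require Import boolp functions reals trigo.
From mathcomp Require Import ring zify.
Import GRing.Theory Num.Theory.
Set Implicit Arguments. Unset Strict Implicit. Unset Printing Implicit Defensive.
Local Open Scope ring_scope.

(* Written additively, the relations of T_0 are linear in the functions
   T^(a) : C -> G, so they are equations in a module over the ring Z[s, w] of
   shift operators, s f = f (. + 1) and w f = f (. + Omega); the relation at the
   node a reads (1 + s^2) T^(a) = s M^(a).  Along a chain of nodes these
   relations give s^a T^(a) = s (1 + s^2 + ... + s^(2a-2)) T^(1), so up to a
   shift every T^(a) is a polynomial in s and w applied to a single generator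
   (T^(1), or T^(r) for D^(2)_(r+1)).  The relations at the remaining nodes and
   the periodicities in w coming from C_(kappa_a hbar) then yield an explicit
   polynomial identity showing that s^(h^vee) + w^e, with e = 0 for the special
   types and e = 1 otherwise, annihilates the generator and hence every T^(a);
   this is (1).  As w^2 acts trivially when e = 1, (2) follows from (1). *)

(** * Ring actions on abelian groups *)

Record ring_action (K : nzRingType) (V : zmodType) := RingAction {
  act :> K -> V -> V;
  actDl : forall a b v, act (a + b) v = act a v + act b v;
  actDr : forall a v v', act a (v + v') = act a v + act a v';
  act1 : forall v, act 1 v = v;
  actM : forall a b v, act (a * b) v = act a (act b v) }.

Section ActionTheory.
Variables (K : nzRingType) (V : zmodType) (A : ring_action K V).

Lemma act0l v : A 0 v = 0.
Proof. by apply: (addrI (A 0 v)); rewrite -actDl !addr0. Qed.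

Lemma act0r a : A a 0 = 0.
Proof. by apply: (addrI (A a 0)); rewrite -actDr !addr0. Qed.

Lemma actNl a v : A (- a) v = - A a v.
Proof. by apply: (addrI (A a v)); rewrite -actDl !subrr act0l. Qed.

Lemma actBl a b v : A (a - b) v = A a v - A b v.
Proof. by rewrite actDl actNl. Qed.

Lemma actNr a v : A a (- v) = - A a v.
Proof. by apply: (addrI (A a v)); rewrite -actDr !subrr act0r. Qed.

End ActionTheory.

Definition int_action (V : zmodType) : ring_action int V :=
  @RingAction int V (fun k v => v *~ k) (fun a b v => mulrzDr v a b)
    (fun a v v' => mulrzDl a v v') (fun v => mulr1z v)
    (fun a b v => etrans (mulrzA v a b) (mulrzAC b a v)).

Section PolyAction.
Variables (K : nzRingType) (V : zmodType) (A : ring_action K V) (sigma : {additive V -> V}).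
Hypothesis sigmaA : forall a v, sigma (A a v) = A a (sigma v).

Fixpoint horner_act (l : seq K) (v : V) : V :=
  if l is c :: l' then A c v + sigma (horner_act l' v) else 0.

Definition poly_act (p : {poly K}) : V -> V := horner_act p.

Lemma poly_act0 v : poly_act 0 v = 0.
Proof. by rewrite /poly_act polyseq0. Qed.

Lemma poly_act_cons p c v : poly_act (p * 'X + c%:P) v = A c v + sigma (poly_act p v).
Proof.
rewrite -cons_poly_def /poly_act polyseq_cons; case: nilP => [p0 | //].
rewrite polyseqC p0 /= raddf0 addr0.
by case: eqP => [-> | _] /=; rewrite ?act0l ?raddf0 ?addr0.
Qed.

Lemma poly_actMX p v : poly_act (p * 'X) v = sigma (poly_act p v).
Proof. by rewrite -[p * 'X]addr0 -polyC0 poly_act_cons act0l add0r. Qed.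

Lemma poly_actDr p v v' : poly_act p (v + v') = poly_act p v + poly_act p v'.
Proof.
elim/poly_ind: p => [|p c IH]; first by rewrite !poly_act0 addr0.
by rewrite !poly_act_cons actDr IH raddfD addrACA.
Qed.

Lemma poly_act0r p : poly_act p 0 = 0.
Proof.
elim/poly_ind: p => [|p c IH]; first by rewrite poly_act0.
by rewrite poly_act_cons IH act0r raddf0 addr0.
Qed.

Lemma poly_actDl p q v : poly_act (p + q) v = poly_act p v + poly_act q v.
Proof.
elim/poly_ind: p q => [|p c IH] q; first by rewrite add0r poly_act0 add0r.
elim/poly_ind: q => [|q d _]; first by rewrite addr0 poly_act0 addr0.
by rewrite addrACA -mulrDl -polyCD !poly_act_cons IH actDl raddfD addrACA.
Qed.

Lemma poly_act_sigma p v : poly_act p (sigma v) = sigma (poly_act p v).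
Proof.
elim/poly_ind: p => [|p c IH]; first by rewrite !poly_act0 raddf0.
by rewrite !poly_act_cons IH raddfD sigmaA.
Qed.

Lemma poly_actMC p c v : poly_act (p * c%:P) v = poly_act p (A c v).
Proof.
elim/poly_ind: p => [|p d IH]; first by rewrite mul0r !poly_act0.
rewrite mulrDl -mulrA -commr_polyX mulrA -polyCM !poly_act_cons IH.
by rewrite actM.
Qed.

Lemma poly_act1 v : poly_act 1 v = v.
Proof. by rewrite -[1]add0r -[0](mul0r 'X) poly_act_cons poly_act0 raddf0 addr0 act1. Qed.

Lemma poly_actM p q v : poly_act (p * q) v = poly_act p (poly_act q v).
Proof.
elim/poly_ind: q v => [|q c IH] v; first by rewrite mulr0 !poly_act0 poly_act0r.
rewrite mulrDr mulrA poly_actDl poly_actMX IH poly_actMC poly_act_cons.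
by rewrite poly_actDr poly_act_sigma addrC.
Qed.

Definition poly_action : ring_action {poly K} V :=
  @RingAction _ _ poly_act poly_actDl poly_actDr poly_act1 poly_actM.

Lemma poly_actionX v : poly_action 'X v = sigma v.
Proof. by rewrite /= -[X in poly_act X](mul1r 'X) poly_actMX poly_act1. Qed.

Lemma poly_actionC c v : poly_action c%:P v = A c v.
Proof. by rewrite /= -[c%:P]add0r -[0](mul0r 'X) poly_act_cons poly_act0 raddf0 addr0. Qed.

Lemma poly_action_comm (tau : {additive V -> V}) :
  (forall a v, tau (A a v) = A a (tau v)) -> (forall v, tau (sigma v) = sigma (tau v)) ->
  forall p v, tau (poly_action p v) = poly_action p (tau v).
Proof.
move=> tauA tau_sigma p v /=; elim/poly_ind: p => [|p c IH]; first by rewrite !poly_act0 raddf0.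
by rewrite !poly_act_cons raddfD tauA tau_sigma IH.
Qed.

End PolyAction.

Local Notation s := ('X : {poly {poly int}}).
Local Notation w := (('X)%:P : {poly {poly int}}).

(* [geo2 n = s^(n-1) U_(n-1)(s + s^-1)], with U the Chebyshev polynomials of
   the second kind. *)
Definition geo2 (n : nat) : {poly {poly int}} := \sum_(j < n) s ^+ (2 * j).

Lemma geo20 : geo2 0 = 0. Proof. by rewrite /geo2 big_ord0. Qed.

Lemma geo2S n : geo2 n.+1 = geo2 n + s ^+ (2 * n).
Proof. by rewrite /geo2 big_ord_recr. Qed.

Lemma geo2Sl n : geo2 n.+1 = 1 + s ^+ 2 * geo2 n.
Proof.
rewrite /geo2 big_ord_recl muln0 expr0 mulr_sumr; congr (_ + _).
by apply: eq_bigr => j _; rewrite /bump /= -exprD mulnS.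
Qed.

Lemma geo2_pow n : s ^+ (2 * n) = 1 - (1 - s ^+ 2) * geo2 n.
Proof.
elim: n => [|n IH]; first by rewrite geo20 mulr0 subr0 expr0.
by rewrite geo2S mulnS exprD IH; ring.
Qed.

Lemma geo2_rec n : (1 + s ^+ 2) * geo2 n.+1 - s ^+ 2 * geo2 n = geo2 n.+2.
Proof. by rewrite !geo2S mulnS exprD; ring. Qed.

Section ShiftOperators.
Variables (V : zmodType) (sigma omega : {additive V -> V}).
Hypothesis sigma_omega : forall v, sigma (omega v) = omega (sigma v).
Hypothesis sigma_inj : injective sigma.

Let omega_action := @poly_action _ _ (int_action V) omega (fun a v => raddfMz omega a v).

Let sigma_omega_action c v : sigma (omega_action c v) = omega_action c (sigma v).
Proof.
exact: (@poly_action_comm _ _ (int_action V) omega _ sigma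
          (fun a v => raddfMz sigma a v) sigma_omega c v).
Qed.

(* [{poly {poly int}}] acts on [V] with the outer variable [s] as [sigma] and
   the inner variable [w = 'X%:P] as [omega]. *)
Definition shift_op : ring_action {poly {poly int}} V :=
  @poly_action _ _ omega_action sigma sigma_omega_action.
Local Notation op := shift_op.

Lemma shift_op_s v : op s v = sigma v.
Proof. exact: poly_actionX. Qed.

Lemma shift_op_w v : op w v = omega v.
Proof. by rewrite /op poly_actionC poly_actionX. Qed.

Lemma shift_op_comm p q v : op p (op q v) = op q (op p v).
Proof. by rewrite -!actM mulrC. Qed.

Lemma shift_op_sX_eq0 n p v : op (s ^+ n * p) v = 0 -> op p v = 0.
Proof.
elim: n => [|n IH]; first by rewrite mul1r.
rewrite exprS -mulrA actM shift_op_s => h; apply: IH; apply: sigma_inj.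
by rewrite h raddf0.
Qed.

Lemma shift_op_1D p v : op (1 + p) v = v + op p v.
Proof. by rewrite actDl act1. Qed.

Lemma shift_op_mul_eq0 p q v : op q v = 0 -> op (p * q) v = 0.
Proof. by rewrite actM => ->; rewrite act0r. Qed.

Lemma shift_op_fix_exp p n v : op p v = v -> op (p ^+ n) v = v.
Proof. by move=> pv; elim: n => [|n IH]; rewrite ?act1 // exprS actM IH. Qed.

Lemma shift_op_w_odd n v : op (w ^+ 2) v = v -> op (w ^+ n) v = op (w ^+ odd n) v.
Proof.
move=> w2v; rewrite -{1}(odd_double_half n) exprD -mul2n exprM.
by rewrite actM (shift_op_fix_exp _ w2v).
Qed.

Lemma shift_op_transfer a q p f g : op (s ^+ a) f = op q g -> op p g = 0 -> op p f = 0.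
Proof.
move=> fg pg; apply: (@shift_op_sX_eq0 a).
by rewrite mulrC actM fg shift_op_comm pg act0r.
Qed.

Lemma shift_op_pow_sub_geo2 m (y g : V) : op w g = g ->
  op (s ^+ m * (s ^+ 2 - w)) y = - g ->
  forall j, op (s ^+ m * (s ^+ (2 * j) - w ^+ j)) y = - op (geo2 j) g.
Proof.
move=> wg yg; elim=> [|j IH].
  by rewrite muln0 !expr0 subrr mulr0 act0l geo20 act0l oppr0.
rewrite (_ : _ * _ = s ^+ 2 * (s ^+ m * (s ^+ (2 * j) - w ^+ j))
                     + w ^+ j * (s ^+ m * (s ^+ 2 - w))); last first.
  by rewrite mulnS exprD [w ^+ j.+1]exprS; ring.
rewrite actDl actM IH [op (w ^+ j * _) _]actM yg !actNr (shift_op_fix_exp _ wg) -actM geo2Sl.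
by rewrite shift_op_1D opprD addrC.
Qed.

(** * Annihilators of the twisted T-systems *)

Lemma chain_geo2 m (t : nat -> V) : t 0%N = 0 ->
  (forall a, (0 < a < m)%N -> op (1 + s ^+ 2) (t a) = op s (t a.-1 + t a.+1)) ->
  forall a, (a <= m)%N -> op (s ^+ a) (t a) = op (s * geo2 a) (t 1%N).
Proof.
move=> t0 rel.
have step a : (a.+2 <= m)%N ->
    op (s ^+ a) (t a) = op (s * geo2 a) (t 1%N) ->
    op (s ^+ a.+1) (t a.+1) = op (s * geo2 a.+1) (t 1%N) ->
    op (s ^+ a.+2) (t a.+2) = op (s * geo2 a.+2) (t 1%N).
  move=> am Pa Pa1.
  have rel_a1 : op (1 + s ^+ 2) (t a.+1) = op s (t a + t a.+2) := rel a.+1 ltac:(lia).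
  have -> : op (s ^+ a.+2) (t a.+2)
         = op (s ^+ a.+1) (op (1 + s ^+ 2) (t a.+1)) - op (s ^+ 2) (op (s ^+ a) (t a)).
    by rewrite rel_a1 !actDr -!actM -!exprSr [s ^+ 2 * _]mulrC -exprD addn2 addrAC subrr add0r.
  rewrite shift_op_comm Pa1 Pa -!actM -actBl -geo2_rec; congr (op _ _); ring.
suff Pm a : (a <= m)%N -> op (s ^+ a) (t a) = op (s * geo2 a) (t 1%N) /\
    ((a < m)%N -> op (s ^+ a.+1) (t a.+1) = op (s * geo2 a.+1) (t 1%N)).
  by move=> a /Pm[].
elim: a => [|a IH] am.
  by rewrite t0 act0r geo20 mulr0 act0l geo2Sl geo20 mulr0 addr0 mulr1 expr1.
have [Pa Pa1] := IH (ltnW am); split; first exact: Pa1 am.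
by move=> am1; apply: step => //; exact: Pa1.
Qed.

Lemma chain_geo2M m (t : nat -> V) : t 0%N = 0 ->
  (forall a, (0 < a < m)%N -> op (1 + s ^+ 2) (t a) = op s (t a.-1 + t a.+1)) ->
  forall a p, (a <= m)%N -> op (p * s ^+ a) (t a) = op (p * (s * geo2 a)) (t 1%N).
Proof. by move=> t0 rel a p am; rewrite actM (chain_geo2 t0 rel am) -actM. Qed.

Lemma A2odd_annihilator n (t : nat -> V) : t 0%N = 0 ->
  (forall a, (0 < a < n.+1)%N -> op (1 + s ^+ 2) (t a) = op s (t a.-1 + t a.+1)) ->
  op (1 + s ^+ 2) (t n.+1) = op s (t n + op w (t n)) ->
  op w (t n.+1) = t n.+1 ->
  forall a, (a <= n.+1)%N -> op (s ^+ (2 * n.+1) + w) (t a) = 0.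
Proof.
move=> t0 rel rel_top fix_top.
have ch := chain_geo2 t0 rel.
have sub := chain_geo2M t0 rel.
have top : op ((1 + s ^+ 2) * (s * geo2 n.+1) - s ^+ 2 * (1 + w) * (s * geo2 n)) (t 1%N) = 0.
  rewrite actBl -!sub // [(1 + _) * _]mulrC actM rel_top -shift_op_1D -!actM.
  by rewrite (_ : s ^+ n.+1 * s * (1 + w) = s ^+ 2 * (1 + w) * s ^+ n) ?subrr // exprS; ring.
have per : op ((w - 1) * (s * geo2 n.+1)) (t 1%N) = 0.
  by rewrite -sub // mulrC actM actBl act1 fix_top subrr act0r.
have ann1 : op (s ^+ (2 * n.+1) + w) (t 1%N) = 0.
  apply: (@shift_op_sX_eq0 1).
  rewrite (_ : _ * _ = (1 + s ^+ 2) * (s * geo2 n.+1) - s ^+ 2 * (1 + w) * (s * geo2 n)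
                      + (w - 1) * (s * geo2 n.+1)); first by rewrite actDl top per addr0.
  by rewrite expr1 mulnS exprD geo2S geo2_pow; ring.
by move=> a an; apply: shift_op_transfer (ch a an) ann1.
Qed.

Lemma A2even_annihilator n (t : nat -> V) : t 0%N = 0 ->
  (forall a, (0 < a < n.+1)%N -> op (1 + s ^+ 2) (t a) = op s (t a.-1 + t a.+1)) ->
  op (1 + s ^+ 2) (t n.+1) = op s (t n + op w (t n.+1)) ->
  op (w ^+ 2) (t 1%N) = t 1%N ->
  forall a, (a <= n.+1)%N -> op (s ^+ (2 * n.+1 + 1) + w) (t a) = 0.
Proof.
move=> t0 rel rel_top per.
have ch := chain_geo2 t0 rel.
have sub := chain_geo2M t0 rel.
have top : op ((1 + s ^+ 2) * (s * geo2 n.+1) - s ^+ 2 * (s * geo2 n)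
               - s * w * (s * geo2 n.+1)) (t 1%N) = 0.
  rewrite !actBl -!sub // [(1 + _) * _]mulrC actM rel_top !actDr -!actM.
  rewrite (_ : s ^+ n.+1 * s * w = s * w * s ^+ n.+1); last by rewrite [s ^+ n.+1]exprS; ring.
  rewrite (_ : s ^+ n.+1 * s = s ^+ 2 * s ^+ n); last by rewrite [s ^+ n.+1]exprS; ring.
  by rewrite addrAC addrK subrr.
have per' : op (w ^+ 2 - 1) (t 1%N) = 0 by rewrite actBl act1 per subrr.
(* Modulo [w^2 - 1], [(1 + s w) * top / s] is [1 + s^(2 n.+1 + 1) w]. *)
have ann1 : op (s ^+ (2 * n.+1 + 1) + w) (t 1%N) = 0.
  apply: (@shift_op_sX_eq0 1).
  rewrite (_ : _ * _ = w * (1 + s * w) * ((1 + s ^+ 2) * (s * geo2 n.+1) - s ^+ 2 * (s * geo2 n)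
                         - s * w * (s * geo2 n.+1))
                       - s * (s ^+ (2 * n.+1 + 1) - s ^+ 2 * w * geo2 n.+1) * (w ^+ 2 - 1)).
    by rewrite actBl (shift_op_mul_eq0 _ top) (shift_op_mul_eq0 _ per') subrr.
  by rewrite addn1 [s ^+ (2 * n.+1).+1]exprS mulnS exprD geo2S geo2_pow; ring.
by move=> a an; apply: shift_op_transfer (ch a an) ann1.
Qed.

Lemma D34_annihilator (t1 t2 : V) :
  op (1 + s ^+ 2) t1 = op s t2 ->
  op (1 + s ^+ 2) t2 = op s (t1 + op (w ^+ 2) t1 + op w t1) ->
  op w t2 = t2 ->
  op (s ^+ 6 + 1) t1 = 0 /\ op (s ^+ 6 + 1) t2 = 0.
Proof.
move=> rel1 rel2 fix2.
have sq : op ((1 + s ^+ 2) * (1 + s ^+ 2) - s ^+ 2 * (1 + w ^+ 2 + w)) t1 = 0.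
  by rewrite actBl actM rel1 shift_op_comm rel2 -shift_op_1D -actDl -!actM -expr2 subrr.
have fixX : op ((w - 1) * (1 + s ^+ 2)) t1 = 0.
  by rewrite actM rel1 shift_op_comm actBl act1 fix2 subrr act0r.
(* With [x = 1 + s^2]: [x^3 t1 = 3 s^2 x t1] as [w] fixes [x t1 = s t2],
   and [s^6 + 1 = x (x^2 - 3 s^2)]. *)
have ann1 : op (s ^+ 6 + 1) t1 = 0.
  rewrite (_ : _ + 1 = (1 + s ^+ 2) * ((1 + s ^+ 2) * (1 + s ^+ 2) - s ^+ 2 * (1 + w ^+ 2 + w))
                      + s ^+ 2 * (w + 2) * ((w - 1) * (1 + s ^+ 2))); last by ring.
  by rewrite actDl (shift_op_mul_eq0 _ sq) (shift_op_mul_eq0 _ fixX) addr0.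
by split=> //; apply: (shift_op_transfer (a := 1) _ ann1); rewrite expr1 -rel1.
Qed.

Lemma E26_annihilator (t1 t2 t3 t4 : V) :
  op (1 + s ^+ 2) t1 = op s t2 ->
  op (1 + s ^+ 2) t2 = op s (t1 + t3) ->
  op (1 + s ^+ 2) t3 = op s (t2 + op w t2 + t4) ->
  op (1 + s ^+ 2) t4 = op s t3 ->
  op w t3 = t3 ->
  [/\ op (s ^+ 12 + w) t1 = 0, op (s ^+ 12 + w) t2 = 0,
      op (s ^+ 12 + w) t3 = 0 & op (s ^+ 12 + w) t4 = 0].
Proof.
set x := 1 + s ^+ 2 => rel1 rel2 rel3 rel4 fix3.
have e3 : op (s ^+ 2) t3 = op (x * x - s ^+ 2) t1.
  have -> : op (s ^+ 2) t3 = op s (op x t2) - op (s ^+ 2) t1.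
    by rewrite rel2 !actDr -!actM -expr2 addrC addKr.
  by rewrite shift_op_comm -rel1 -actM actBl.
have e4 : op (s ^+ 3) t4 = op (x * (x * x - s ^+ 2) - s ^+ 2 * (1 + w) * x) t1.
  have -> : op (s ^+ 3) t4 = op x (op (s ^+ 2) t3) - op (s ^+ 2 * (1 + w)) (op s t2).
    rewrite shift_op_comm rel3 -shift_op_1D !actDr -!actM -exprSr.
    rewrite (_ : s ^+ 2 * (1 + w) * s = s ^+ 3 * (1 + w)); last by ring.
    by rewrite addrAC subrr add0r.
  by rewrite e3 -rel1 -!actM actBl.
have rel1' : op (x * (x * (x * x - s ^+ 2) - s ^+ 2 * (1 + w) * x)
                 - s ^+ 2 * (x * x - s ^+ 2)) t1 = 0.
  rewrite actBl !actM -e4 -e3 shift_op_comm rel4 -!actM.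
  by rewrite (_ : s ^+ 3 * s = s * s * s ^+ 2) ?subrr //; ring.
have rel2' : op ((w - 1) * (x * x - s ^+ 2)) t1 = 0.
  by rewrite actM -e3 shift_op_comm actBl act1 fix3 subrr act0r.
(* By [rel1'] and [rel2'], [s^4 w] acts on [t1] as [Q = x^4 - 4 s^2 x^2 + 2 s^4];
   and [s^16 + Q = (1 - s^2 + s^4) (Q - s^4) (x^2 - s^2)], where
   [(Q - s^4) (x^2 - s^2)] kills [t1] by [rel2']. *)
have ann1 : op (s ^+ 12 + w) t1 = 0.
  apply: (@shift_op_sX_eq0 4).
  rewrite (_ : _ * _ = ((1 - s ^+ 2 + s ^+ 4) * (x * x - s ^+ 2) - 1)
            * (x * (x * (x * x - s ^+ 2) - s ^+ 2 * (1 + w) * x) - s ^+ 2 * (x * x - s ^+ 2))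
          + ((1 - s ^+ 2 + s ^+ 4) * (s ^+ 4 + s ^+ 2 * (x * x - s ^+ 2)) - s ^+ 2)
            * ((w - 1) * (x * x - s ^+ 2))); last by rewrite /x; ring.
  by rewrite actDl (shift_op_mul_eq0 _ rel1') (shift_op_mul_eq0 _ rel2') addr0.
split=> //.
- by apply: (shift_op_transfer (a := 1) _ ann1); rewrite expr1 -rel1.
- exact: shift_op_transfer e3 ann1.
- exact: shift_op_transfer e4 ann1.
Qed.

Lemma D2_annihilator k (t : nat -> V) : t 0%N = 0 ->
  (forall a, (0 < a < k.+1)%N -> op (1 + s ^+ 2) (t a) = op s (t a.-1 + t a.+1)) ->
  op (1 + s ^+ 2) (t k.+1) = op s (t k + t k.+2 + op w (t k.+2)) ->
  op (1 + s ^+ 2) (t k.+2) = op s (t k.+1) ->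
  op w (t 1%N) = t 1%N ->
  op (w ^+ 2) (t k.+2) = t k.+2 ->
  forall a, (a <= k.+2)%N -> op (s ^+ (2 * k.+2) + w ^+ (~~ odd k.+2)) (t a) = 0.
Proof.
move=> t0 rel rel_m rel_r fix1 fixY; rewrite -addrA -shift_op_1D in rel_m.
set Y := t k.+2 in rel_m rel_r fixY *.
have ch := chain_geo2 t0 rel.
have sub := chain_geo2M t0 rel.
have eY1 : op (s ^+ k.+2 * (1 + w)) Y = op (s * geo2 k.+2) (t 1%N).
  have -> : op (s ^+ k.+2 * (1 + w)) Y
         = op (s ^+ k.+1) (op s (t k + op (1 + w) Y)) - op (s ^+ 2 * s ^+ k) (t k).
    by rewrite !actDr -!actM -!exprSr -exprD add2n addrAC subrr add0r.
  by rewrite -rel_m shift_op_comm ch // sub // -actM -actBl -geo2_rec; congr (op _ _); ring.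
(* [t 1] is a multiple of [Y], which thus generates all the [t a]. *)
have eY2 : op (s ^+ k.+1 * (s ^+ 2 - w)) Y = - t 1%N.
  apply: sigma_inj; rewrite -!shift_op_s -actM actNr.
  rewrite (_ : s * _ = s * s ^+ k.+1 * (1 + s ^+ 2) - s ^+ k.+2 * (1 + w)); last first.
    by rewrite [s ^+ k.+2]exprS; ring.
  rewrite actBl eY1 !actM rel_r (shift_op_comm (s ^+ k.+1)) ch // -!actM -actBl -actNl.
  by rewrite [geo2 k.+2]geo2Sl; congr (op _ _); ring.
have key := shift_op_pow_sub_geo2 fix1 eY2.
have annY : op (s ^+ (2 * k.+2) + w ^+ k.+3) Y = 0.
  apply: (@shift_op_sX_eq0 k.+2).
  rewrite (_ : _ * _ = s * (s ^+ k.+1 * (s ^+ (2 * k.+2) - w ^+ k.+2))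
                       + w ^+ k.+2 * (s ^+ k.+2 * (1 + w))); last first.
    by rewrite [s ^+ k.+2]exprS [w ^+ k.+3]exprS; ring.
  rewrite actDl actM key [op (w ^+ _ * _) _]actM eY1 shift_op_comm (shift_op_fix_exp _ fix1).
  by rewrite actNr -actM addNr.
have annY' : op (s ^+ (2 * k.+2) + w ^+ (~~ odd k.+2)) Y = 0.
  by rewrite actDl -(shift_op_w_odd k.+3 fixY) -actDl.
have ann1 : op (s ^+ (2 * k.+2) + w ^+ (~~ odd k.+2)) (t 1%N) = 0.
  by apply: (shift_op_transfer (a := 0) _ annY'); rewrite expr0 act1 -[t 1%N]opprK -eY2 -actNl.
move=> a; rewrite leq_eqVlt => /orP[/eqP-> | ak]; first exact: annY'.
exact: shift_op_transfer (ch a ak) ann1.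
Qed.

End ShiftOperators.

Section ShiftFunctions.
Variables (R : realType) (G : zmodType).
Local Notation C := R[i].

Definition shift (c : C) (f : C -> G) : C -> G := fun u => f (u + c).

Lemma shift_is_zmod_morphism c : zmod_morphism (shift c).
Proof. by []. Qed.

HB.instance Definition _ c :=
  GRing.isZmodMorphism.Build (C -> G) (C -> G) (shift c) (shift_is_zmod_morphism c).

Lemma shiftC c d f : shift c (shift d f) = shift d (shift c f).
Proof. by apply/funext => u; rewrite /shift addrAC. Qed.

Lemma shift_inj c : injective (shift c).
Proof.
move=> f g fg; apply/funext => u.
by have := congr1 (fun h => h (u - c)) fg; rewrite /shift subrK.
Qed.

Lemma addfE (f g : C -> G) u : (f + g) u = f u + g u. Proof. by []. Qed.
Lemma zerofE u : (0 : C -> G) u = 0. Proof. by []. Qed.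

Variable W : C.
Local Notation opW := (shift_op (shiftC 1 W)).

Lemma opW_s1 f u : opW s f u = f (u + 1).
Proof. by rewrite shift_op_s. Qed.

Lemma opW_w1 f u : opW w f u = f (u + W).
Proof. by rewrite shift_op_w. Qed.

Lemma opW_s n f u : opW (s ^+ n) f u = f (u + n%:R).
Proof.
elim: n u => [|n IH] u; first by rewrite expr0 act1 addr0.
by rewrite exprS actM opW_s1 IH mulrS addrA.
Qed.

Lemma opW_w n f u : opW (w ^+ n) f u = f (u + n%:R * W).
Proof.
elim: n u => [|n IH] u; first by rewrite expr0 act1 mul0r addr0.
by rewrite exprS actM opW_w1 IH mulrS mulrDl mul1r addrA.
Qed.

Lemma opW_tsystem (f g : C -> G) :
  (forall u, f (u - 1) + f (u + 1) = g u) -> opW (1 + s ^+ 2) f = opW s g.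
Proof.
move=> fg; apply/funext => u.
by rewrite actDl act1 addfE opW_s -[s]expr1 opW_s -fg addrK -addrA.
Qed.

Lemma opW_annihilator_antiperiodic f h e :
  opW (s ^+ h + w ^+ e) f = 0 -> forall u, f (u + h%:R) = - f (u + e%:R * W).
Proof.
move=> ann u; have /eqP := congr1 (fun g => g u) ann.
by rewrite actDl addfE opW_s opW_w zerofE addr_eq0 => /eqP.
Qed.

Lemma antiperiodic_period (f : C -> G) (p q : C) :
  (forall u, f (u + p) = - f (u + q)) -> (forall u, f (u + q *+ 2) = f u) ->
  forall u, f (u + p *+ 2) = f u.
Proof.
move=> fpq fq u.
by rewrite mulr2n addrA fpq addrAC fpq opprK -addrA -mulr2n fq.
Qed.

End ShiftFunctions.

(** * The relations of T_0 *)

Section T0Families.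
Variables (R : realType) (hb : R[i]) (G : zmodType) (t : nat -> R[i] -> G).
Hypothesis hb0 : hb != 0.
Local Notation opX X := (shift_op (@shiftC R G 1 (Omega X hb))).

Lemma T0_period X a m : T0_family X hb t -> in_Isigma X a ->
  (kappa_a X a * m)%N = kappa X -> forall u, t a (u + m%:R * Omega X hb) = t a u.
Proof.
case=> _ tper _ Ha km u; have := tper a Ha u 1; rewrite mul1r => <-; congr (t a (u + _)).
have : (0 < kappa X)%N by case: X {tper Ha km}.
rewrite -km muln_gt0 => /andP[ka_gt0 m_gt0].
rewrite /period /Omega -km natrM; field.
by rewrite hb0 !pnatr_eq0 -!lt0n ka_gt0 m_gt0.
Qed.

Lemma T0_fix_w X a : T0_family X hb t -> in_Isigma X a -> kappa_a X a = kappa X ->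
  opX X w (t a) = t a.
Proof.
move=> T Ha k; apply/funext => u; rewrite opW_w1 -[Omega X hb]mul1r.
by apply: (T0_period (m := 1) T Ha); rewrite muln1.
Qed.

Lemma T0_fix_w2 X a : T0_family X hb t -> in_Isigma X a -> (kappa_a X a * 2)%N = kappa X ->
  opX X (w ^+ 2) (t a) = t a.
Proof. by move=> T Ha k; apply/funext => u; rewrite opW_w (T0_period T Ha). Qed.

Lemma T0_tsystem X a g : T0_family X hb t -> in_Isigma X a ->
  (forall u, Mrhs X hb t a u = g u) -> opX X (1 + s ^+ 2) (t a) = opX X s g.
Proof. by case=> _ _ rel Ha Mg; apply: opW_tsystem => u; rewrite rel. Qed.

Lemma T0_A2odd_annihilator r : (2 <= r)%N -> T0_family (A2odd r) hb t ->
  forall a, in_Isigma (A2odd r) a ->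
  opX (A2odd r) (s ^+ hvee (A2odd r) + w ^+ (~~ special_type (A2odd r))) (t a) = 0.
Proof.
case: r => [|n] // _ T; have [t0 _ _] := T.
move=> a /andP[_ an]; apply: (A2odd_annihilator (@shift_inj R G 1) (funext t0)) an.
- move=> b /andP[b0 bn]; apply: T0_tsystem T _ _ => [|u]; first by rewrite /in_Isigma /=; lia.
  by rewrite /Mrhs [X in X = _]/= !subn1 addn1 [X in X = _]/= ifT // -ltnS.
- apply: T0_tsystem T _ _ => [|u]; first by rewrite /in_Isigma /=; lia.
  by rewrite /Mrhs [X in X = _]/= subn1 [X in X = _]/= ltnn addfE opW_w1.
- by apply: T0_fix_w T _ _; rewrite /in_Isigma /= ?eqxx //; lia.
Qed.

Lemma T0_A2even_annihilator r : (1 <= r)%N -> T0_family (A2even r) hb t ->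
  forall a, in_Isigma (A2even r) a ->
  opX (A2even r) (s ^+ hvee (A2even r) + w ^+ (~~ special_type (A2even r))) (t a) = 0.
Proof.
case: r => [|n] // _ T; have [t0 _ _] := T.
move=> a /andP[_ an]; apply: (A2even_annihilator (@shift_inj R G 1) (funext t0)) an.
- move=> b /andP[b0 bn]; apply: T0_tsystem T _ _ => [|u]; first by rewrite /in_Isigma /=; lia.
  by rewrite /Mrhs [X in X = _]/= !subn1 addn1 [X in X = _]/= ifT // -ltnS.
- apply: T0_tsystem T _ _ => [|u]; first by rewrite /in_Isigma /=; lia.
  by rewrite /Mrhs [X in X = _]/= subn1 [X in X = _]/= ltnn addfE opW_w1.
- by apply: T0_fix_w2 T _ _.
Qed.

Lemma T0_D2_annihilator r : (3 <= r)%N -> T0_family (D2 r) hb t ->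
  forall a, in_Isigma (D2 r) a ->
  opX (D2 r) (s ^+ hvee (D2 r) + w ^+ (~~ special_type (D2 r))) (t a) = 0.
Proof.
case: r => [|[|[|k]]] // _ T; have [t0 _ _] := T.
move=> a /andP[_ an]; apply: (D2_annihilator (@shift_inj R G 1) (funext t0)) an.
- move=> b /andP[b0 bn]; apply: T0_tsystem T _ _ => [|u]; first by rewrite /in_Isigma /=; lia.
  by rewrite /Mrhs [X in X = _]/= subn1 addn1 subn2 [X in X = _]/= ifT // -ltnS.
- apply: T0_tsystem T _ _ => [|u]; first by rewrite /in_Isigma /=; lia.
  by rewrite /Mrhs [X in X = _]/= subn1 subn2 [X in X = _]/= ltnn eqxx !addfE opW_w1.
- apply: T0_tsystem T _ _ => [|u]; first by rewrite /in_Isigma /=; lia.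
  rewrite /Mrhs [X in X = _]/= subn1 subn2 [X in X = _]/= !ifF //; lia.
- by apply: T0_fix_w T _ _.
- by apply: T0_fix_w2 T _ _; rewrite /in_Isigma /= ?eqxx //; lia.
Qed.

Lemma T0_E26_annihilator : T0_family E26 hb t ->
  forall a, in_Isigma E26 a ->
  opX E26 (s ^+ hvee E26 + w ^+ (~~ special_type E26)) (t a) = 0.
Proof.
move=> T; have rel a g := @T0_tsystem E26 a g T.
have [] := E26_annihilator (@shift_inj R G 1) (rel 1%N (t 2%N) isT (fun u => erefl))
  (rel 2%N (t 1%N + t 3%N) isT (fun u => erefl)) (rel 3%N _ isT _)
  (rel 4%N (t 3%N) isT (fun u => erefl)).
- by move=> u; rewrite addfE addfE opW_w1.
- exact: T0_fix_w T _ _.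
by move=> ann1 ann2 ann3 ann4 [|[|[|[|[|a]]]]].
Qed.

Lemma T0_D34_annihilator : T0_family D34 hb t ->
  forall a, in_Isigma D34 a ->
  opX D34 (s ^+ hvee D34 + w ^+ (~~ special_type D34)) (t a) = 0.
Proof.
move=> T; have rel a g := @T0_tsystem D34 a g T.
have [] := D34_annihilator (@shift_inj R G 1) (rel 1%N (t 2%N) isT (fun u => erefl))
  (rel 2%N _ isT _) (T0_fix_w (a := 2) T isT erefl).
- move=> u; rewrite /Mrhs [X in X = _]/= !addfE opW_w1 opW_w.
  rewrite -(T0_period (a := 1) (m := 3) T isT erefl (u - Omega D34 hb)).
  by congr (_ + t _ _ + _); ring.
by move=> ann1 ann2 [|[|[|a]]].
Qed.

Lemma T0_antiperiodic X : tt_wf X -> T0_family X hb t ->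
  forall a, in_Isigma X a ->
  forall u, t a (u + (hvee X)%:R) = - t a (u + (~~ special_type X)%:R * Omega X hb).
Proof.
move=> wf T a Ha; apply: opW_annihilator_antiperiodic; move: wf T a Ha.
case: X => [r|r|r||] wf T.
- exact: T0_A2odd_annihilator.
- exact: T0_A2even_annihilator.
- exact: T0_D2_annihilator.
- exact: T0_E26_annihilator.
- exact: T0_D34_annihilator.
Qed.

Lemma T0_twist_period X a : T0_family X hb t -> in_Isigma X a ->
  forall u, t a (u + ((~~ special_type X)%:R * Omega X hb) *+ 2) = t a u.
Proof.
case sp : (special_type X) => T Ha u; first by rewrite mul0r mul0rn addr0.
have k2 : kappa X = 2%N by case: X sp {T Ha}.
have [k1|k2'] : kappa_a X a = 1%N \/ kappa_a X a = 2%N.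
  by case: X sp k2 {T Ha} => [r|r|r||] //= _ _; try case: ifP; auto.
- rewrite /= mul1r -mulr_natl.
  by apply: (T0_period (m := 2) T Ha); rewrite k1 k2.
- rewrite /= mul1r mulr2n addrA -[Omega X hb]mul1r.
  by rewrite !(T0_period (m := 1) T Ha) // k2' k2.
Qed.

End T0Families.

Theorem theorem9p27 (R : realType) (X : twisted_type) (hb : R[i]) :
  tt_wf X ->
  (forall q : rat, hb != twopii R * ratr q) ->
  forall (G : zmodType) (t : nat -> R[i] -> G),
  T0_family X hb t ->
  forall a : nat, in_Isigma X a -> forall u : R[i],
    (if special_type X then t a (u + (hvee X)%:R) = - t a u
     else t a (u + (hvee X)%:R) = - t a (u + Omega X hb)) /\
    t a (u + (2 * hvee X)%:R) = t a u.
Proof.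
move=> wf hgen G t T a Ha u.
have hb0 : hb != 0 by apply: contraNneq (hgen 0) => ->; rewrite rmorph0 mulr0.
have half := T0_antiperiodic hb0 wf T Ha.
split; first by case: (special_type X) half => half; rewrite half /= ?mul0r ?addr0 ?mul1r.
by rewrite natrM mulr_natl (antiperiodic_period half (T0_twist_period hb0 T Ha)).
Qed.
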